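(* Let $T\ge1$ be an integer and $a\in(0,1]$. Define $\alpha_0=\alpha_{-1}=1$ and $\alpha_t=\frac{T-t+2}{T-t+1+a}\alpha_{t-1}$ for $t=1,\dots,T$. Then \begin{enumerate} \item $\alpha_T\ge\frac{(T+1)^{1-a}}{2^{1-a}}$; \item $\frac{\sum_{t=1}^T\alpha_t}{\alpha_T}\le4\left(1+\frac{T^a-1}{a}\right)$; \item $4\left(1+\frac{T^a-1}{a}\right)\le 8T^a\ln(T+1)$. \end{enumerate} *)

From Stdlib Require Import Reals Lra Lia.
Open Scope R_scope.

(* alpha T a t : alpha_0 = 1, alpha_t = (T-t+2)/(T-t+1+a) * alpha_{t-1} for t >= 1.
   (alpha_{-1} = 1 is not used by the statement.) *)
Fixpoint alpha (T : nat) (a : R) (t : nat) : R :=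
  match t with
  | O => 1
  | S t' => (INR T - INR t + 2) / (INR T - INR t + 1 + a) * alpha T a t'
  end.

(* With [w_t = alpha_t (T - t + 2)^(1-a)], concavity of [x |-> x^(1-a)] gives
   [((k + 2)/(k + 1))^(1-a) <= 1 + (1 - a)/(k + 1) <= (k + 1)/(k + a)], so [w] is
   nondecreasing on [0, T].  [w_0 <= w_T] is the lower bound on [alpha_T];
   [w_(i+1) <= w_T] gives [alpha_(i+1) <= 2 alpha_T (T - i)^(a-1)], and the sum of
   [j^(a-1)] over [1 <= j <= T] is at most [1 + (T^a - 1)/a] by the tangent inequality
   [(j - 1)^a <= j^a - a j^(a-1)].  The last bound follows from [T^a - 1 <= a T^a ln T]
   and [(T + 1)^2 >= 4 T]. *)
From Stdlib Require Import Reals Lra Lia.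
Open Scope R_scope.

Lemma ln_le x y : 0 < x -> x <= y -> ln x <= ln y.
Proof.
  intros hx [hxy | ->]; [now left; apply ln_increasing | apply Rle_refl].
Qed.

Lemma Rpower_pos x y : 0 < Rpower x y.
Proof. apply exp_pos. Qed.

Lemma Rpower_ge_1 x y : 1 <= x -> 0 <= y -> 1 <= Rpower x y.
Proof.
  intros hx hy; rewrite <- (Rpower_O x) by lra; now apply Rle_Rpower.
Qed.

Lemma exp_tangent_le u c : exp c * (1 + u - c) <= exp u.
Proof.
  replace (exp u) with (exp c * exp (u - c)) by (rewrite <- exp_plus; f_equal; ring).
  apply Rmult_le_compat_l; [left; apply exp_pos|].
  pose proof (exp_ineq1_le (u - c)); lra.
Qed.

(* The convex combination, with weights [r] and [1 - r], of the tangent inequalities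
   of [exp] at [r ln x] evaluated at [ln x] and at [0]. *)
Lemma Rpower_le_affine x r : 0 < x -> 0 <= r <= 1 -> Rpower x r <= 1 + r * (x - 1).
Proof.
  intros hx hr; unfold Rpower.
  pose proof (exp_tangent_le (ln x) (r * ln x)) as tan_x.
  pose proof (exp_tangent_le 0 (r * ln x)) as tan_1.
  rewrite exp_ln in tan_x by exact hx; rewrite exp_0 in tan_1.
  set (E := exp (r * ln x)) in *.
  nra.
Qed.

Lemma Rpower_ratio_le k a : 0 <= k -> 0 < a <= 1 ->
  Rpower ((k + 2) / (k + 1)) (1 - a) <= (k + 1) / (k + a).
Proof.
  intros hk ha.
  apply (Rle_trans _ (1 + (1 - a) * ((k + 2) / (k + 1) - 1))).
  { apply Rpower_le_affine; [apply Rdiv_lt_0_compat|]; lra. }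
  assert (gap : (k + 1) / (k + a) - (1 + (1 - a) * ((k + 2) / (k + 1) - 1))
                = (1 - a) ^ 2 / ((k + a) * (k + 1))) by (field; lra).
  assert (0 <= (1 - a) ^ 2 / ((k + a) * (k + 1))).
  { apply Rle_mult_inv_pos; [apply pow2_ge_0 | nra]. }
  lra.
Qed.

Lemma Rpower_increment_ge x a : 0 < x -> 0 < a <= 1 ->
  a * Rpower (x + 1) (a - 1) <= Rpower (x + 1) a - Rpower x a.
Proof.
  intros hx ha.
  assert (split_x : Rpower x a = Rpower (x / (x + 1)) a * Rpower (x + 1) a).
  { rewrite Rpower_mult_distr by (try apply Rdiv_lt_0_compat; lra).
    f_equal; field; lra. }
  assert (split_exp : Rpower (x + 1) (a - 1) = Rpower (x + 1) a / (x + 1)).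
  { unfold Rminus; rewrite Rpower_plus, Rpower_Ropp, Rpower_1 by lra; reflexivity. }
  pose proof (Rpower_le_affine (x / (x + 1)) a ltac:(apply Rdiv_lt_0_compat; lra)
    ltac:(lra)) as concave.
  pose proof (Rpower_pos (x + 1) a).
  rewrite split_x, split_exp.
  replace (x / (x + 1) - 1) with (- / (x + 1)) in concave by (field; lra).
  assert (Rpower (x / (x + 1)) a * Rpower (x + 1) a
          <= (1 + a * - / (x + 1)) * Rpower (x + 1) a)
    by (apply Rmult_le_compat_r; lra).
  unfold Rdiv; lra.
Qed.

Lemma sum_f_R0_rev (f : nat -> R) n :
  sum_f_R0 (fun i => f (n - i)%nat) n = sum_f_R0 f n.
Proof.
  induction n as [|n IH]; [reflexivity|].
  rewrite decomp_sum by lia; cbn [pred sum_f_R0].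
  now rewrite <- IH, Nat.sub_0_r, Rplus_comm.
Qed.

Lemma sum_Rpower_le a n : 0 < a <= 1 ->
  sum_f_R0 (fun i => Rpower (INR (S i)) (a - 1)) n
  <= 1 + (Rpower (INR (S n)) a - 1) / a.
Proof.
  intros ha; induction n as [|n IH]; cbn [sum_f_R0].
  - change (INR 1) with 1; unfold Rpower; rewrite ln_1, !Rmult_0_r, exp_0.
    unfold Rdiv; lra.
  - pose proof (Rpower_increment_ge (INR (S n)) a (lt_0_INR _ (Nat.lt_0_succ n)) ha)
      as step.
    rewrite <- S_INR in step.
    apply (Rmult_le_compat_r (/ a)) in step; [|left; apply Rinv_0_lt_compat; lra].
    replace (a * Rpower (INR (S (S n))) (a - 1) * / a)
      with (Rpower (INR (S (S n))) (a - 1)) in step by (field; lra).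
    unfold Rdiv in *; lra.
Qed.

Lemma Rpower_sub_1_le x a : 0 < x -> Rpower x a - 1 <= a * Rpower x a * ln x.
Proof.
  intros hx.
  pose proof (exp_ineq1_le (- (a * ln x))) as tangent.
  rewrite exp_Ropp in tangent; fold (Rpower x a) in tangent.
  pose proof (Rpower_pos x a) as hX.
  apply (Rmult_le_compat_r (Rpower x a)) in tangent; [|lra].
  rewrite Rinv_l in tangent by lra.
  nra.
Qed.

Lemma ln_succ_ge x : 0 < x -> 2 * ln 2 + ln x <= 2 * ln (x + 1).
Proof.
  intros hx.
  replace (2 * ln 2 + ln x) with (ln (2 * 2 * x)) by (rewrite !ln_mult by lra; ring).
  replace (2 * ln (x + 1)) with (ln ((x + 1) * (x + 1))) by (rewrite ln_mult by lra; ring).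
  apply ln_le; [lra | pose proof (pow2_ge_0 (x - 1)); nra].
Qed.

Lemma one_add_Rpower_div_le_ln x a : 1 <= x -> 0 < a ->
  1 + (Rpower x a - 1) / a <= 2 * Rpower x a * ln (x + 1).
Proof.
  intros hx ha.
  pose proof (Rpower_sub_1_le x a ltac:(lra)).
  pose proof (ln_succ_ge x ltac:(lra)).
  pose proof (Rpower_ge_1 x a hx ltac:(lra)).
  assert (0 <= ln x) by (rewrite <- ln_1; apply ln_le; lra).
  assert ((Rpower x a - 1) / a <= Rpower x a * ln x).
  { apply (Rmult_le_reg_l a); [exact ha|].
    replace (a * ((Rpower x a - 1) / a)) with (Rpower x a - 1) by (field; lra).
    lra. }
  pose proof ln_lt_2.
  nra.
Qed.

Section Alpha.

Variables (T : nat) (a : R).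
Hypothesis a_range : 0 < a <= 1.

Lemma alpha_pos t : (t <= T)%nat -> 0 < alpha T a t.
Proof.
  induction t as [|t IH]; intros ht; cbn [alpha]; [lra|].
  assert (INR (S t) <= INR T) by (apply le_INR; lia).
  apply Rmult_lt_0_compat; [apply Rdiv_lt_0_compat; lra | apply IH; lia].
Qed.

Definition alpha_weighted (t : nat) : R :=
  alpha T a t * Rpower (INR T - INR t + 2) (1 - a).

Lemma alpha_weighted_le_succ t : (t < T)%nat ->
  alpha_weighted t <= alpha_weighted (S t).
Proof.
  intros ht; unfold alpha_weighted; cbn [alpha]; rewrite S_INR.
  assert (INR t + 1 <= INR T) by (rewrite <- S_INR; apply le_INR; lia).
  set (k := INR T - INR t).
  replace (INR T - (INR t + 1) + 2) with (k + 1) by (unfold k; ring).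
  replace (INR T - (INR t + 1) + 1 + a) with (k + a) by (unfold k; ring).
  replace (Rpower (k + 2) (1 - a))
    with (Rpower ((k + 2) / (k + 1)) (1 - a) * Rpower (k + 1) (1 - a))
    by (rewrite Rpower_mult_distr by (try apply Rdiv_lt_0_compat; unfold k; lra);
        f_equal; field; unfold k; lra).
  pose proof (Rpower_ratio_le k a ltac:(unfold k; lra) a_range).
  pose proof (alpha_pos t ltac:(lia)).
  pose proof (Rpower_pos (k + 1) (1 - a)).
  assert (alpha T a t * Rpower ((k + 2) / (k + 1)) (1 - a)
          <= alpha T a t * ((k + 1) / (k + a))) by (apply Rmult_le_compat_l; lra).
  nra.
Qed.

Lemma alpha_weighted_le t s : (t <= s <= T)%nat ->
  alpha_weighted t <= alpha_weighted s.
Proof.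
  induction s as [|s IH]; intros hts.
  - replace t with 0%nat by lia; apply Rle_refl.
  - destruct (Nat.eq_dec t (S s)) as [-> | hne]; [apply Rle_refl|].
    apply (Rle_trans _ (alpha_weighted s)); [apply IH; lia|].
    apply alpha_weighted_le_succ; lia.
Qed.

Lemma alpha_last_ge :
  Rpower (INR T + 2) (1 - a) / Rpower 2 (1 - a) <= alpha T a T.
Proof.
  pose proof (alpha_weighted_le 0 T ltac:(lia)) as mono.
  unfold alpha_weighted in mono; cbn [alpha INR] in mono.
  replace (INR T - 0 + 2) with (INR T + 2) in mono by ring.
  replace (INR T - INR T + 2) with 2 in mono by ring.
  pose proof (Rpower_pos 2 (1 - a)).
  apply (Rmult_le_reg_r (Rpower 2 (1 - a))); [lra|].
  unfold Rdiv; rewrite Rmult_assoc, Rinv_l by lra; lra.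
Qed.

Lemma alpha_succ_le i : (i < T)%nat ->
  alpha T a (S i) <= 2 * alpha T a T * Rpower (INR (T - i)) (a - 1).
Proof.
  intros hi.
  pose proof (alpha_weighted_le (S i) T ltac:(lia)) as mono.
  unfold alpha_weighted in mono.
  rewrite S_INR in mono.
  replace (INR T - INR T + 2) with 2 in mono by ring.
  assert (INR (T - i) = INR T - INR i) by (apply minus_INR; lia).
  assert (1 <= INR (T - i)) by (apply (le_INR 1); lia).
  replace (INR T - (INR i + 1) + 2) with (INR (T - i) + 1) in mono by lra.
  set (j := INR (T - i)) in *.
  assert (Rpower 2 (1 - a) <= 2).
  { rewrite <- (Rpower_1 2) at 2 by lra; apply Rle_Rpower; lra. }
  assert (Rpower (j + 1) (a - 1) <= Rpower j (a - 1)).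
  { replace (a - 1) with (- (1 - a)) by ring; rewrite !Rpower_Ropp.
    apply Rinv_le_contravar; [apply Rpower_pos | apply Rle_Rpower_l; lra]. }
  assert (inv : Rpower (j + 1) (1 - a) * Rpower (j + 1) (a - 1) = 1).
  { rewrite <- Rpower_plus; replace (1 - a + (a - 1)) with 0 by ring.
    apply Rpower_O; lra. }
  pose proof (alpha_pos T (le_n T)).
  pose proof (alpha_pos (S i) hi).
  pose proof (Rpower_pos (j + 1) (a - 1)).
  pose proof (Rpower_pos j (a - 1)).
  apply (Rle_trans _ (alpha T a T * Rpower 2 (1 - a) * Rpower (j + 1) (a - 1))).
  - replace (alpha T a (S i)) with
      (alpha T a (S i) * Rpower (j + 1) (1 - a) * Rpower (j + 1) (a - 1))
      by (rewrite Rmult_assoc, inv; ring).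
    apply Rmult_le_compat_r; lra.
  - apply Rmult_le_compat; nra.
Qed.

Lemma sum_alpha_le : (1 <= T)%nat ->
  sum_f_R0 (fun i => alpha T a (S i)) (T - 1)
  <= 2 * alpha T a T * (1 + (Rpower (INR T) a - 1) / a).
Proof.
  intros hT.
  set (c := 2 * alpha T a T).
  assert (0 < c) by (pose proof (alpha_pos T (le_n T)); unfold c; lra).
  assert (reindex : sum_f_R0 (fun i => Rpower (INR (T - i)) (a - 1)) (T - 1)
                    = sum_f_R0 (fun i => Rpower (INR (S i)) (a - 1)) (T - 1)).
  { rewrite <- (sum_f_R0_rev (fun i => Rpower (INR (S i)) (a - 1))).
    apply sum_eq; intros i hi; do 3 f_equal; lia. }
  apply (Rle_trans _ (sum_f_R0 (fun i => Rpower (INR (T - i)) (a - 1) * c) (T - 1))).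
  { apply sum_Rle; intros i hi; rewrite Rmult_comm; apply alpha_succ_le; lia. }
  rewrite <- scal_sum, reindex.
  apply Rmult_le_compat_l; [lra|].
  replace T with (S (T - 1)) at 2 by lia.
  now apply sum_Rpower_le.
Qed.

End Alpha.

Theorem lemmaA7 (T : nat) (a : R) :
  (1 <= T)%nat -> 0 < a <= 1 ->
  Rpower (INR T + 1) (1 - a) / Rpower 2 (1 - a) <= alpha T a T /\
  (sum_f_R0 (fun i => alpha T a (S i)) (T - 1)) / alpha T a T
    <= 4 * (1 + (Rpower (INR T) a - 1) / a) /\
  4 * (1 + (Rpower (INR T) a - 1) / a) <= 8 * Rpower (INR T) a * ln (INR T + 1).
Proof.
  intros hT ha.
  assert (hT1 : 1 <= INR T) by (apply (le_INR 1); exact hT).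
  pose proof (alpha_pos T a ha T (le_n T)).
  split; [|split].
  - apply (Rle_trans _ (Rpower (INR T + 2) (1 - a) / Rpower 2 (1 - a))).
    + apply Rmult_le_compat_r; [left; apply Rinv_0_lt_compat, Rpower_pos|].
      apply Rle_Rpower_l; lra.
    + now apply alpha_last_ge.
  - pose proof (sum_alpha_le T a ha hT).
    pose proof (Rpower_ge_1 (INR T) a hT1 ltac:(lra)).
    assert (0 <= (Rpower (INR T) a - 1) / a) by (apply Rle_mult_inv_pos; lra).
    apply (Rmult_le_reg_r (alpha T a T)); [lra|].
    unfold Rdiv at 1; rewrite Rmult_assoc, Rinv_l, Rmult_1_r by lra.
    nra.
  - pose proof (one_add_Rpower_div_le_ln (INR T) a hT1 (proj1 ha)); lra.
Qed.
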